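(* In any execution of $\mathtt{search}(\mathcal{G},T)$ (defined in the context), let $t$ be a tangle returned by extract-tangles$(Z,\sigma)$ in an iteration whose region $Z$ has priority $p$, $\alpha\equiv p\pmod 2$, and suppose $Z$ is the highest region of player $\alpha$, i.e. no region recorded in $r$ at that moment has a priority of parity $\alpha$. Then $E_T(t)=\emptyset$ (computed in the full game $\mathcal{G}$).
   Context: Parity games: $\mathcal{G}=(V_0,V_1,E,\mathrm{pr})$, $V=V_0\cup V_1$ finite, partitioned into vertices of Even ($0$) and Odd ($1$); $E\subseteq V\times V$ with every vertex having a successor; $\mathrm{pr}:V\to\{0,\dots,d\}$. $E(u)=\{v:(u,v)\in E\}$, $\mathrm{pr}(U)=\max_{u\in U}\mathrm{pr}(u)$, $\mathrm{pr}^{-1}(p)$ the set of vertices of priority $p$, $\overline{\alpha}=1-\alpha$. A cycle is won by $\alpha$ if its highest priority has parity $\alpha$. A strategy of $\alpha$ is a partial function $\sigma$ on $V_\alpha$ with $\sigma(v)\in E(v)$. For $U\subseteq V$, $\mathcal{G}\cap U$ is the subgame with vertices $V\cap U$ and edges $E\cap(U\times U)$, and $\mathcal{G}\setminus U=\mathcal{G}\cap(V\setminus U)$. A $p$-tangle is a nonempty $U\subseteq V$ with $p=\mathrm{pr}(U)$ such that for $\alpha\equiv p\pmod 2$ there is a strategy $\sigma:U\cap V_\alpha\to U$ (witness strategy $\sigma_T(U)$) with $(U,E\cap(\sigma\cup((U\cap V_{\overline{\alpha}})\times U)))$ strongly connected and all its cycles won by $\alpha$ (''won by $\alpha$''). For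 a tangle $t$ won by $\alpha$ in a game with edge set $E$, $E_T(t)=\{v\notin t:\exists u\in t\cap V_{\overline{\alpha}},(u,v)\in E\}$. $T_\alpha$ denotes the tangles of $T$ won by $\alpha$; for a subgame $\mathcal{G}'$, $T\cap\mathcal{G}'$ denotes the tangles of $T$ contained in its vertex set. Tangle attractor: for a game $\mathcal{G}$ with vertices $V$, tangles $T$, player $\alpha$ and $A\subseteq V$, $\mathit{TAttr}^{\mathcal{G},T}_\alpha(A)$ is the least $Z\supseteq A$ containing every $v\in V_\alpha$ with $E(v)\cap Z\neq\emptyset$, every $v\in V_{\overline{\alpha}}$ with $E(v)\subseteq Z$, and every vertex of every $t\in T_\alpha$ with $\emptyset\neq E_T(t)\subseteq Z$ ($E_T$ computed in $\mathcal{G}$). It is computed iteratively together with a strategy $\sigma$ of $\alpha$ (initially empty): when an $\alpha$-vertex is added individually, $\sigma$ maps it to a successor already in $Z$; each $\alpha$-vertex of $A$ gets as $\sigma$-value a successor in $Z$ once one exists; when the vertices of a tangle $t$ are added, $\sigma(u):=\sigma_T(t)(u)$ for every $\alpha$-vertex $u\in t$ not yet in $\mathrm{dom}(\sigma)$. extract-tangles$(Z,\sigma)$, for a subgame $\mathcal{G}'=(V',E')$ with top priority $p$, $\alpha\equiv p$, region $Z\subseteq V'$ and strategy $\sigma$: let $Y_Z$ be the greatest $X\subseteq Z$ such that every $v\in X\cap V_{\overline{\alpha}}$ has $E'(v)\subseteq X$ and every $v\in X\cap V_\alpha$ has $\sigma(v)\in X$; let $H$ be the graph on $Y_Z$ with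 edges $(v,\sigma(v))$ for $v\in Y_Z\cap V_\alpha$ and $(v,w)\in E'$ for $v\in Y_Z\cap V_{\overline{\alpha}}$; return all bottom strongly connected components of $H$ that contain at least one edge of $H$, each with witness strategy $\sigma$ restricted to it. $\mathtt{search}(\mathcal{G},T)$ (with $T$ a set of tangles of $\mathcal{G}$): repeat forever: set $r:=\emptyset$ (a partial function $V\to\mathbb{N}$, the region function) and $Y:=\emptyset$; while $V\setminus\mathrm{dom}(r)\neq\emptyset$: let $\mathcal{G}':=\mathcal{G}\setminus\mathrm{dom}(r)$ with vertex set $V'$, $T':=T\cap\mathcal{G}'$, $p:=\mathrm{pr}(\mathcal{G}')$, $\alpha:=p\bmod 2$; compute $(Z,\sigma):=\mathit{TAttr}^{\mathcal{G}',T'}_\alpha(\mathrm{pr}^{-1}(p)\cap V')$ (the region of priority $p$); let $A:=$ extract-tangles$(Z,\sigma)$; if some $t\in A$ has $E_T(t)=\emptyset$ with $E_T$ computed in the full game $\mathcal{G}$, return $(T\cup Y,t)$; otherwise set $r(v):=p$ for all $v\in Z$ and $Y:=Y\cup A$. After the while-loop, set $T:=T\cup Y$. *)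

From mathcomp Require Import all_boot.
Set Implicit Arguments. Unset Strict Implicit. Unset Printing Implicit Defensive.

(* A parity game on the finite vertex type V:
   owner v = false  <-> v in V_0 (Even),  owner v = true <-> v in V_1 (Odd);
   E : rel V is the edge relation; pr : V -> nat the priority.
   A player alpha is a bool (false = Even = 0, true = Odd = 1); the player
   associated with priority p is [odd p].
   A subgame G cap W is represented by its vertex set W : {set V};
   its edges are E restricted to W x W. *)

Section ParityGames.
Variables (V : finType) (owner : V -> bool) (E : rel V) (pr : V -> nat).

Definition topP (U : {set V}) : nat := \max_(v in U) pr v.

(* A (candidate) tangle: its vertex set together with its witness strategy,
   a partial function (V -> option V). *)
Definition tangle := ({set V} * (V -> option V))%type.

Definition twin (t : tangle) : bool := odd (topP t.1).

Definition tangle_graph (t : tangle) : rel V := fun u w =>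
  [&& u \in t.1, w \in t.1 &
      if owner u == twin t then t.2 u == Some w else E u w].

Definition is_tangle (t : tangle) : Prop :=
  [/\ t.1 != set0,
      (forall u, u \in t.1 -> owner u = twin t ->
         exists2 w, t.2 u = Some w & (w \in t.1) && E u w),
      (forall u, ~~ ((u \in t.1) && (owner u == twin t)) -> t.2 u = None),
      (forall u w, u \in t.1 -> w \in t.1 -> connect (tangle_graph t) u w) &
      (forall c : seq V, c != [::] -> cycle (tangle_graph t) c ->
         odd (\max_(v <- c) pr v) = twin t)].

(* E_T(t) for a tangle t won by player a, computed in the subgame with
   vertex set W (W = setT for the full game). *)
Definition escapes (W : {set V}) (a : bool) (t : tangle) : {set V} :=
  [set v in W | (v \notin t.1) &&
     [exists u in t.1, (owner u != a) && E u v]].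

Definition upd (s : V -> option V) (v w : V) : V -> option V :=
  fun x => if x == v then Some w else s x.

Section TAttr.
Variables (W : {set V}) (T : tangle -> Prop) (a : bool) (A : {set V}).

(* an a-vertex of A still without strategy value although a successor
   already lies in Z (it must be assigned immediately: "once one exists") *)
Definition pending (Z : {set V}) (s : V -> option V) : Prop :=
  exists v w, [/\ v \in A, owner v = a, s v = None, w \in Z & E v w].

Definition Ta (t : tangle) : Prop := [/\ T t, t.1 \subset W & twin t = a].

Inductive tattr_run : {set V} -> (V -> option V) -> Prop :=
| TA_init : tattr_run A (fun _ => None)
| TA_assignA : forall Z s v w, tattr_run Z s ->
    v \in A -> owner v = a -> s v = None -> w \in Z -> E v w ->
    tattr_run Z (upd s v w)
| TA_alpha : forall Z s v w, tattr_run Z s -> ~ pending Z s ->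
    v \in W -> v \notin Z -> owner v = a -> w \in Z -> E v w ->
    tattr_run (v |: Z) (upd s v w)
| TA_opp : forall Z s v, tattr_run Z s -> ~ pending Z s ->
    v \in W -> v \notin Z -> owner v != a ->
    (forall w, E v w -> w \in W -> w \in Z) ->
    tattr_run (v |: Z) s
| TA_tangle : forall Z s (t : tangle), tattr_run Z s -> ~ pending Z s ->
    Ta t -> ~~ (t.1 \subset Z) ->
    escapes W a t != set0 -> escapes W a t \subset Z ->
    tattr_run (Z :|: t.1)
      (fun u => match s u with
                | Some w => Some w
                | None => if (u \in t.1) && (owner u == a) then t.2 u else None
                end).

Definition tattr_final (Z : {set V}) (s : V -> option V) : Prop :=
  [/\ ~ pending Z s,
      (forall v w, v \in W -> v \notin Z -> owner v = a -> w \in Z -> ~~ E v w),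
      (forall v, v \in W -> v \notin Z -> owner v != a ->
         exists w, [&& E v w, w \in W & w \notin Z]) &
      (forall t, Ta t -> escapes W a t != set0 -> escapes W a t \subset Z ->
         t.1 \subset Z)].

Definition tattr (Z : {set V}) (s : V -> option V) : Prop :=
  tattr_run Z s /\ tattr_final Z s.

End TAttr.

Section Extract.
Variables (W : {set V}) (a : bool) (Z : {set V}) (s : V -> option V).

Definition Yclosed (X : {set V}) : Prop :=
  X \subset Z /\
  forall v, v \in X ->
    if owner v == a then exists2 w, s v = Some w & w \in X
    else forall w, E v w -> w \in W -> w \in X.

Definition Ygreatest (Y : {set V}) : Prop :=
  Yclosed Y /\ forall X, Yclosed X -> X \subset Y.

Definition Hgraph (Y : {set V}) : rel V := fun u w =>
  [&& u \in Y, w \in Y &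
      if owner u == a then s u == Some w else E u w && (w \in W)].

(* t is one of the tangles returned by extract-tangles(Z, sigma):
   a bottom SCC of H containing an edge, with witness strategy sigma
   restricted to it *)
Definition extract (t : tangle) : Prop :=
  exists Y, Ygreatest Y /\
    [/\ t.1 \subset Y, t.1 != set0,
      (forall u v, u \in t.1 -> v \in t.1 -> connect (Hgraph Y) u v),
      (forall u v, u \in t.1 -> v \in Y ->
          connect (Hgraph Y) u v -> connect (Hgraph Y) v u -> v \in t.1) &
      (forall u w, u \in t.1 -> Hgraph Y u w -> w \in t.1)] /\
    (exists u w, [/\ u \in t.1, w \in t.1 & Hgraph Y u w]) /\
    (forall u, t.2 u = if (u \in t.1) && (owner u == a) then s u else None).

End Extract.

Definition subV (r : V -> option nat) : {set V} := [set v | r v == None].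

Definition regionA (W : {set V}) : {set V} := W :&: [set v | pr v == topP W].

(* reach T0 T r Y : the state (T, r, Y) is reached at the start of an
   iteration of the while-loop in some execution of search(G, T0)
   that has not returned yet. *)
Inductive reach (T0 : tangle -> Prop) :
    (tangle -> Prop) -> (V -> option nat) -> (tangle -> Prop) -> Prop :=
| R_start : reach T0 T0 (fun _ => None) (fun _ => False)
| R_inner : forall T r Y Z s,
    reach T0 T r Y ->
    subV r != set0 ->
    tattr (subV r) T (odd (topP (subV r))) (regionA (subV r)) Z s ->
    (forall t, extract (subV r) (odd (topP (subV r))) Z s t ->
       escapes setT (odd (topP (subV r))) t != set0) ->
    reach T0 T (fun v => if v \in Z then Some (topP (subV r)) else r v)
             (fun t => Y t \/ extract (subV r) (odd (topP (subV r))) Z s t)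
| R_outer : forall T r Y,
    reach T0 T r Y ->
    subV r = set0 ->
    reach T0 (fun t => T t \/ Y t) (fun _ => None) (fun _ => False).

End ParityGames.

(** An escape edge of the extracted tangle [t] leaves an opponent vertex [u]
    of [t]. If its target is still in the current subgame, then it lies in
    the closed set [Y] of extract-tangles, and [t], being a bottom SCC of the
    graph on [Y], contains it. Otherwise the target lies in an earlier region
    of priority [q]; as [Z] is the highest region of [alpha], [q] has the
    parity of the owner of [u], and an attractor for that player admits no
    edge from a vertex of that player left outside it. *)

From mathcomp Require Import all_boot.

Set Implicit Arguments.
Unset Strict Implicit.
Unset Printing Implicit Defensive.

Section SearchInvariants.
Variables (V : finType) (owner : V -> bool) (E : rel V) (pr : V -> nat).

Lemma tattr_run_subset (W : {set V}) (T : tangle V -> Prop) (a : bool)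
    (A Z : {set V}) (s : V -> option V) :
  A \subset W -> tattr_run owner E pr W T a A Z s -> Z \subset W.
Proof.
move=> AW; elim=> //.
- by move=> Z0 s0 v w _ IH _ vW _ _ _ _; rewrite subUset sub1set vW IH.
- by move=> Z0 s0 v _ IH _ vW _ _ _; rewrite subUset sub1set vW IH.
- by move=> Z0 s0 t0 _ IH _ [_ t0W _] _ _ _; rewrite subUset IH.
Qed.

Lemma tattr_subset (W : {set V}) (T : tangle V -> Prop) (a : bool)
    (Z : {set V}) (s : V -> option V) :
  tattr owner E pr W T a (regionA pr W) Z s -> Z \subset W.
Proof. by case=> run _; apply: tattr_run_subset run; apply: subsetIl. Qed.

Lemma reach_region_no_entry T0 T r Y :
  reach owner E pr T0 T r Y ->
  forall u v q, u \in subV r -> r v = Some q -> owner u = odd q -> ~~ E u v.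
Proof.
elim=> // {}T {}r {}Y Z s _ IH _ [_ [_ no_entry _ _]] _ u v q.
rewrite !inE; case: ifP => // uZ /eqP ru.
have uW : u \in subV r by rewrite inE ru.
case: ifP => [vZ [<-] ou | _ rv]; last exact: IH.
by apply: no_entry; rewrite ?uZ.
Qed.

Lemma extract_subset (W : {set V}) (a : bool) (Z : {set V})
    (s : V -> option V) (t : tangle V) :
  extract owner E W a Z s t -> t.1 \subset Z.
Proof. by case=> Y [[[YZ _] _] [[tY _ _ _ _] _]]; apply: subset_trans YZ. Qed.

Lemma extract_opp_succ (W : {set V}) (a : bool) (Z : {set V})
    (s : V -> option V) (t : tangle V) (u v : V) :
  extract owner E W a Z s t ->
  u \in t.1 -> owner u != a -> E u v -> v \in W -> v \in t.1.
Proof.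
case=> Y [[[_ Yclosed] _] [[tY _ _ _ t_bottom] _]] ut ou Euv vW.
have uY : u \in Y := subsetP tY u ut.
have := Yclosed u uY; rewrite (negbTE ou) => Y_succ.
have vY := Y_succ v Euv vW.
by apply: (t_bottom u) => //; rewrite /Hgraph uY vY (negbTE ou) Euv vW.
Qed.

End SearchInvariants.

Theorem lemma8 (V : finType) (owner : V -> bool) (E : rel V) (pr : V -> nat)
  (Htot : forall v, exists w, E v w)
  (T0 : tangle V -> Prop) (HT0 : forall t, T0 t -> is_tangle owner E pr t)
  (T : tangle V -> Prop) (r : V -> option nat) (Y : tangle V -> Prop)
  (Hreach : reach owner E pr T0 T r Y)
  (HW : subV r != set0)
  (Z : {set V}) (s : V -> option V)
  (Hattr : tattr owner E pr (subV r) T (odd (topP pr (subV r)))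
             (regionA pr (subV r)) Z s)
  (t : tangle V)
  (Ht : extract owner E (subV r) (odd (topP pr (subV r))) Z s t)
  (Hhighest : forall v q, r v = Some q -> odd q <> odd (topP pr (subV r))) :
  escapes owner E setT (odd (topP pr (subV r))) t = set0.
Proof.
apply/setP => v; rewrite !inE /=; apply/negP.
case/andP=> vt /existsP [u /and3P [ut ou Euv]].
have tW : t.1 \subset subV r.
  exact: subset_trans (extract_subset Ht) (tattr_subset Hattr).
have uW := subsetP tW u ut.
case rv: (r v) => [q|].
- have ou_q : owner u = odd q.
    move: ou (Hhighest v q rv); set a := odd _.
    by case: (owner u); case: (odd q); case: a.
  by move: Euv; apply/negP/(reach_region_no_entry Hreach uW rv).
- have vW : v \in subV r by rewrite inE rv.
  by move: vt; rewrite (extract_opp_succ Ht ut ou Euv vW).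
Qed.
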